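(* Let $\ell(z)=\log(1+\exp(-z))$. For a data point $z=(x,y)\in\mathbb{R}^d\times\{-1,+1\}$, a norm $\|\cdot\|$ on $\mathbb{R}^d$ and $c>0$, define $$R_z(w)=\max_{\|r\|\le c}\ell\big(y\,w^\top(x+r)\big)-\ell\big(y\,w^\top x\big),\qquad w\in\mathbb{R}^d.$$ Then $R_z$ is in general not convex: there exist $d$, $c>0$ and $z$ such that $R_z$ is not a convex function of $w$. *)

From HB Require Import structures.
From mathcomp Require Import all_boot all_order all_algebra.
From mathcomp Require Import all_classical all_reals all_analysis.
Set Implicit Arguments. Unset Strict Implicit. Unset Printing Implicit Defensive.
Import Order.TTheory GRing.Theory Num.Theory.
Local Open Scope ring_scope.
Local Open Scope classical_set_scope.

Definition logloss {R : realType} (z : R) : R := ln (1 + expR (- z)).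

Definition dotv {R : realType} {d : nat} (w x : 'rV[R]_d) : R :=
  \sum_(i < d) w ord0 i * x ord0 i.

Definition is_norm {R : realType} {d : nat} (N : 'rV[R]_d -> R) : Prop :=
  [/\ (forall x, N x = 0 -> x = 0),
      (forall (a : R) x, N (a *: x) = `|a| * N x) &
      (forall x y, N (x + y) <= N x + N y)].

(* R_z(w) = max_{N r <= c} l(y w^T (x + r)) - l(y w^T x); the maximum over the
   (compact) ball is attained, so it equals the supremum used here. *)
Definition Rz {R : realType} {d : nat} (N : 'rV[R]_d -> R) (c : R)
  (x : 'rV[R]_d) (y : R) (w : 'rV[R]_d) : R :=
  sup [set logloss (y * dotv w (x + r)) | r in [set r | N r <= c]]
  - logloss (y * dotv w x).

Definition convex_fun {R : realType} {d : nat} (f : 'rV[R]_d -> R) : Prop :=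
  forall (w1 w2 : 'rV[R]_d) (t : R), 0 <= t -> t <= 1 ->
    f (t *: w1 + (1 - t) *: w2) <= t * f w1 + (1 - t) * f w2.

From HB Require Import structures.
From mathcomp Require Import all_boot all_order all_algebra.
From mathcomp Require Import all_classical all_reals all_analysis.
From mathcomp Require Import ring lra.
Set Implicit Arguments. Unset Strict Implicit. Unset Printing Implicit Defensive.
Import Order.TTheory GRing.Theory Num.Theory.
Local Open Scope ring_scope.

(* Take d = 1, x = 1, y = 1 and c = N(1), so that the perturbation ball is
   {t * 1 : |t| <= 1}. For w >= 0 the loss l(w (1 + t)) is largest at t = -1
   because l is decreasing, hence R_z(w) = l(0) - l(w) on w >= 0. This is the
   negative of the strictly convex function l, and the midpoint inequality
   fails at w = 0, 2. *)

Section Norm.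
Variables (R : realType) (d : nat) (N : 'rV[R]_d -> R).
Hypothesis normN : is_norm N.

Lemma is_norm0 : N 0 = 0.
Proof. by case: normN => _ hZ _; rewrite -(scale0r 0) hZ normr0 mul0r. Qed.

Lemma is_normN x : N (- x) = N x.
Proof. by case: normN => _ hZ _; rewrite -scaleN1r hZ normrN normr1 mul1r. Qed.

Lemma is_norm_ge0 x : 0 <= N x.
Proof.
case: normN => _ _ hD.
have := hD x (- x); rewrite subrr is_norm0 is_normN; lra.
Qed.

Lemma is_norm_gt0 x : x != 0 -> 0 < N x.
Proof.
case: normN => h0 _ _ x_neq0.
rewrite lt_def is_norm_ge0 andbT; apply/eqP => /h0 x_eq0.
by rewrite x_eq0 eqxx in x_neq0.
Qed.

End Norm.

Section Line.
Variable R : realType.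

Lemma dotv1 (w v : 'rV[R]_1) : dotv w v = w ord0 ord0 * v ord0 ord0.
Proof. by rewrite /dotv big_ord1. Qed.

Lemma rV1_scale_const (r : 'rV[R]_1) : r = r ord0 ord0 *: const_mx 1.
Proof. by apply/rowP => i; rewrite ord1 !mxE mulr1. Qed.

Lemma const_mx1_neq0 : const_mx 1 != 0 :> 'rV[R]_1.
Proof. by apply/eqP => /rowP /(_ ord0) /eqP; rewrite !mxE oner_eq0. Qed.

End Line.

Lemma sup_eq_max (R : realType) (E : set R) x : E x -> ubound E x -> sup E = x.
Proof.
move=> Ex ubx; apply/le_anti/andP; split; first exact: (ge_sup (ex_intro _ x Ex)).
exact: (ub_le_sup (ex_intro _ x ubx)).
Qed.

Section Logloss.
Variable R : realType.

Lemma logloss_le (a b : R) : a <= b -> logloss b <= logloss a.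
Proof.
move=> le_ab; rewrite /logloss ler_ln ?posrE ?ltr_wpDr ?expR_ge0 //.
by rewrite lerD2l ler_expR lerN2.
Qed.

Lemma logloss_midpoint_gt : 2 * logloss (1 : R) < logloss 0 + logloss 2.
Proof.
rewrite /logloss oppr0 expR0.
set a := expR (-1 : R).
have e2 : expR (- 2 : R) = a * a by rewrite /a -expRD; congr expR; lra.
have a_gt0 : 0 < a by apply: expR_gt0.
have a_lt1 : a < 1 by rewrite /a expR_lt1; lra.
rewrite e2 -lnM ?posrE; [|lra|nra].
rewrite (_ : 2 * ln (1 + a) = ln (1 + a) + ln (1 + a)); last lra.
rewrite -lnM ?posrE; [|lra|lra].
(* (1 + a)^2 = 1 + 2a + a^2 < 2 + 2a^2 since (1 - a)^2 > 0 *)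
rewrite ltr_ln ?posrE; nra.
Qed.

End Logloss.

Section UnitPerturbation.
Variables (R : realType) (N : 'rV[R]_1 -> R).
Hypothesis normN : is_norm N.

Let one : 'rV[R]_1 := const_mx 1.

Lemma ball_coord_ge (r : 'rV[R]_1) : N r <= N one -> -1 <= r ord0 ord0.
Proof.
have Ngt0 : 0 < N one by apply: is_norm_gt0 => //; apply: const_mx1_neq0.
case: normN => _ hZ _.
have -> : N r = `|r ord0 ord0| * N one by rewrite {1}(rV1_scale_const r) hZ.
by rewrite ger_pMl // lerNl => /ler_normlP [].
Qed.

Lemma Rz_one_nonneg (w : 'rV[R]_1) : 0 <= w ord0 ord0 ->
  Rz N (N one) one 1 w = logloss 0 - logloss (w ord0 ord0).
Proof.
move=> w_ge0; rewrite /Rz mul1r dotv1 mxE mulr1; congr (_ - _).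
apply: sup_eq_max.
  exists (- one); first by rewrite /= is_normN.
  by rewrite subrr dotv1 mxE !mulr0.
move=> _ [r /ball_coord_ge r_ge <-]; apply: logloss_le.
by rewrite mul1r dotv1 !mxE mulr_ge0 // -lerBlDl sub0r.
Qed.

End UnitPerturbation.

Theorem proposition5 (R : realType) :
  exists d : nat, forall N : 'rV[R]_d -> R, is_norm N ->
    exists (c : R) (x : 'rV[R]_d) (y : R),
      0 < c /\ (y = 1 \/ y = -1) /\ ~ convex_fun (Rz N c x y).
Proof.
exists 1%N => N normN.
exists (N (const_mx 1)), (const_mx 1), 1.
split; first exact/(is_norm_gt0 normN)/const_mx1_neq0.
split; first by left.
move=> /(_ 0 (2%:R *: const_mx 1) (1 / 2)).
rewrite !(Rz_one_nonneg normN) ?mxE ?mulr1 ?mulr0 ?add0r ?subrr; try lra.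
have := @logloss_midpoint_gt R.
rewrite (_ : (1 - 1 / 2) * 2 = 1 :> R); last lra.
move=> midpoint_gt convex; have := convex ltac:(lra) ltac:(lra); lra.
Qed.
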